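(* In the setting below, if $N\ge4$ then the $H$-skeleton $B=X^H$ is a $p$-robust random 0–1 matrix with $p=2/N$. Setting: $G$ is a graph on $N$ vertices with edges $e_1,\dots,e_m$; $G_k$ has the same vertices and edge set $\{e_1,\dots,e_k\}$; fix $0\le k\le m-1$, $S=\mathcal I(G_k)$, $H=\mathcal I(G_{k+1})$, and $n\ge1$. Initial states $A_1,\dots,A_n\in S$ have arbitrary joint distribution; for each $i\in[n]$ the BIDC chain on $G_k$ is run from $A_i$ for $n$ steps with fresh randomness independent across steps, chains and initial states, giving $X_{i0}=A_i,X_{i1},\dots,X_{in}$; $X$ is the $n\times n$ matrix with $i$-th row $(X_{i1},\dots,X_{in})$.
   Context: $\mathcal I(F)$ is the family of independent sets (including $\emptyset$) of a graph $F$. BIDC on $F=(V,E)$: from $X_t$ draw $u\in V$ uniformly; $X_{t+1}=X_t\setminus\{u\}$ if $u\in X_t$; $X_{t+1}=X_t\cup\{u\}$ if $u\notin X_t$ and $X_t\cup\{u\}\in\mathcal I(F)$; else $X_{t+1}=X_t$. The $H$-skeleton $X^H$ is the 0–1 matrix with entry $1$ iff $X_{ij}\in H$. In an $n\times n$ matrix, entry $(i,j)$ precedes $(k,\ell)$, written $(i,j)\prec(k,\ell)$, if $i<k$, or $i=k$ and $j<\ell$. A random 0–1 matrix $Y=[\xi_{ij}]$ is $p$-robust ($p\in(0,1)$) if for every $(i,j)$, every set of preceding positions $(i_1,j_1),\dots,(i_r,j_r)\prec(i,j)$ and every $a_1,\dots,a_r\in\{0,1\}$ with $\Pr(\xi_{i_1j_1}=a_1,\dots,\xi_{i_rj_r}=a_r)>0$,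 we have $\Pr(\xi_{ij}=1\mid \xi_{i_1j_1}=a_1,\dots,\xi_{i_rj_r}=a_r)\ge p$ (and $\Pr(\xi_{ij}=1)\ge p$ unconditionally). *)

From mathcomp Require Import all_boot all_order all_algebra.
Set Implicit Arguments. Unset Strict Implicit. Unset Printing Implicit Defensive.
Import Order.TTheory GRing.Theory Num.Theory.
Local Open Scope ring_scope.

(* A graph on vertex set 'I_N is given by its (ordered) list of edges,
   each edge a 2-element vertex set. [take k edges] is the edge list of G_k. *)
Definition indep (N : nat) (E : seq {set 'I_N}) (X : {set 'I_N}) : bool :=
  all (fun e : {set 'I_N} => ~~ (e \subset X)) E.

Definition bidc_step (N : nat) (E : seq {set 'I_N}) (X : {set 'I_N}) (u : 'I_N)
  : {set 'I_N} :=
  if u \in X then X :\ u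
  else if indep E (u |: X) then u |: X else X.

(* Sample space: initial states A (row i gives A_i) and the fresh uniform
   vertex choices u (u (i,l) is the vertex drawn at step l+1 of chain i). *)
Definition Omega (N n : nat) : finType :=
  ({ffun 'I_n -> {set 'I_N}} * {ffun 'I_n * 'I_n -> 'I_N})%type.

(* Entry X_{i,j+1} (j : 'I_n, i.e. the matrix entry in column j+1):
   the state of chain i after j+1 steps. *)
Definition Xent (N n : nat) (E : seq {set 'I_N}) (w : Omega N n)
  (i j : 'I_n) : {set 'I_N} :=
  foldl (fun (X : {set 'I_N}) (l : 'I_n) => bidc_step E X (w.2 (i, l))) (w.1 i)
        [seq l <- enum 'I_n | (nat_of_ord l <= nat_of_ord j)%N].

(* Probability of an event: A has law mu, u is uniform on 'I_N^(n*n),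
   independent of A. *)
Definition Pr (R : realFieldType) (N n : nat)
  (mu : {ffun {ffun 'I_n -> {set 'I_N}} -> R}) (Ev : pred (Omega N n)) : R :=
  \sum_(w : Omega N n) mu w.1 * (N%:R ^+ (n * n))^-1 * (Ev w)%:R.

Definition prec (n : nat) (a b : 'I_n * 'I_n) : bool :=
  (a.1 < b.1)%N || ((a.1 == b.1) && (a.2 < b.2)%N).

Definition p_robust (R : realFieldType) (T : finType) (n : nat)
  (P : pred T -> R) (xi : 'I_n -> 'I_n -> T -> bool) (p : R) : Prop :=
  (forall i j, p <= P (xi i j)) /\
  (forall (i j : 'I_n) (Q : {set 'I_n * 'I_n}) (a : 'I_n * 'I_n -> bool),
     (forall q, q \in Q -> prec q (i, j)) ->
     let Ev := fun w => [forall q in Q, xi q.1 q.2 w == a q] in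
     0 < P Ev ->
     p <= P (fun w => xi i j w && Ev w) / P Ev).

Definition skel (N n k : nat) (E : seq {set 'I_N}) (i j : 'I_n)
  (w : Omega N n) : bool :=
  indep (take k.+1 E) (Xent (take k E) w i j).

From mathcomp Require Import all_boot all_order all_algebra.
Set Implicit Arguments. Unset Strict Implicit. Unset Printing Implicit Defensive.
Import Order.TTheory GRing.Theory Num.Theory.
Local Open Scope ring_scope.

(* Condition on everything that precedes entry (i, j) and resample the vertex
   u_{i,j} drawn at that step: shifting it by v ranges over all N vertices,
   preserves the probability and fixes every preceding entry.  The state Y of
   chain i before that step lies in I(G_k), and the next state contains the new
   edge e = e_{k+1} for at most N - 2 of the N choices of the vertex: if both
   ends of e lie in Y, drawing either of them deletes it from the state; if one
   end c of e is missing from Y, every vertex other than c keeps c out.  The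
   next state stays in I(G_k), so it lies in I(G_{k+1}) with conditional
   probability at least 2/N. *)

Lemma indep_bidc_step (N : nat) (E : seq {set 'I_N}) (X : {set 'I_N}) u :
  indep E X -> indep E (bidc_step E X u).
Proof.
rewrite /bidc_step; case: ifP => [_ indepX|_ indepX]; last by case: ifP.
apply/allP => e eE; apply: contra (allP indepX e eE) => /subset_trans; apply.
exact: subsetDl.
Qed.

Lemma indep_foldl_bidc_step (N : nat) (T : Type) (E : seq {set 'I_N})
    (f : T -> 'I_N) (s : seq T) (X : {set 'I_N}) :
  indep E X -> indep E (foldl (fun Y l => bidc_step E Y (f l)) X s).
Proof. by elim: s X => //= l s IHs X indepX; apply/IHs/indep_bidc_step. Qed.

Lemma eq_foldl_bidc_step (N : nat) (T : eqType) (E : seq {set 'I_N})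
    (f g : T -> 'I_N) (s : seq T) (X : {set 'I_N}) :
  {in s, f =1 g} ->
  foldl (fun Y l => bidc_step E Y (f l)) X s =
  foldl (fun Y l => bidc_step E Y (g l)) X s.
Proof.
elim: s X => //= l s IHs X fg; rewrite fg ?mem_head //.
by apply: IHs => x xs; apply: fg; rewrite inE xs orbT.
Qed.

Lemma bidc_step_sub (N : nat) (E : seq {set 'I_N}) (X : {set 'I_N}) u :
  bidc_step E X u \subset u |: X.
Proof.
rewrite /bidc_step; case: ifP => _.
  exact: subset_trans (subsetDl _ _) (subsetUr _ _).
by case: ifP => _; rewrite ?subxx ?subsetUr.
Qed.

Lemma card_bidc_step_notsub (N : nat) (E : seq {set 'I_N}) (e X : {set 'I_N}) :
  (3 <= N)%N -> #|e| = 2%N ->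
  (2 <= #|[set u | ~~ (e \subset bidc_step E X u)]|)%N.
Proof.
move=> N_ge3 /eqP/cards2P [a [b [neq_ab ->]]].
case: (boolP ([set a; b] \subset X)) => [abX|/subsetPn [c c_ab cX]]; last first.
- apply: leq_trans (subset_leq_card (_ : [set~ c] \subset _)).
    by rewrite cardsC1 card_ord -ltnS (ltn_predK N_ge3).
  apply/subsetP => u; rewrite !inE => neq_uc; apply: contra cX => ab_sub.
  move/subsetP: (bidc_step_sub E X u) => /(_ c (subsetP ab_sub c c_ab)).
  by rewrite !inE eq_sym (negbTE neq_uc).
apply: leq_trans (subset_leq_card (_ : [set a; b] \subset _)).
  by rewrite cards2 neq_ab.
apply/subsetP => c c_ab; rewrite inE /bidc_step (subsetP abX c c_ab).
by apply/subsetP => /(_ c c_ab); rewrite !inE eqxx.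
Qed.

Lemma filter_ord_leq_rcons (n : nat) (j : 'I_n) :
  [seq l <- enum 'I_n | (nat_of_ord l <= j)%N] =
  rcons [seq l <- enum 'I_n | (nat_of_ord l < j)%N] j.
Proof.
have val_filter (P : pred nat) :
    [seq val l | l : 'I_n <- enum 'I_n & P l] = [seq x <- iota 0 n | P x].
  by rewrite -val_enum_ord filter_map.
apply: (inj_map val_inj).
rewrite map_rcons (val_filter (leq^~ j)) (val_filter (ltn^~ j)).
rewrite (filter_iota_leq 0 (ltn_ord j)) (filter_iota_ltn 0 (ltnW (ltn_ord j))).
by rewrite -cats1 -[RHS]/(iota 0 j ++ iota (0 + j) 1) -iotaD addn1.
Qed.

Lemma sumr_nat_bool (R : pzSemiRingType) (T : finType) (P : pred T) :
  \sum_(x : T) (P x)%:R = #|[set x | P x]|%:R :> R.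
Proof.
rewrite -sum1dep_card natr_sum [RHS]big_mkcond; apply: eq_bigr => x _.
by case: (P x).
Qed.

Section Chains.

Variables (N n : nat) (E : seq {set 'I_N}).

Definition Xprev (w : Omega N n) (i j : 'I_n) : {set 'I_N} :=
  foldl (fun X l => bidc_step E X (w.2 (i, l))) (w.1 i)
        [seq l <- enum 'I_n | (nat_of_ord l < j)%N].

Lemma Xent_Xprev (w : Omega N n) (i j : 'I_n) :
  Xent E w i j = bidc_step E (Xprev w i j) (w.2 (i, j)).
Proof. by rewrite /Xent filter_ord_leq_rcons foldl_rcons. Qed.

Lemma eq_Xent (w w' : Omega N n) (i j : 'I_n) :
  w.1 i = w'.1 i -> (forall l : 'I_n, (l <= j)%N -> w.2 (i, l) = w'.2 (i, l)) ->
  Xent E w i j = Xent E w' i j.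
Proof.
move=> eq_start eq_draws; rewrite /Xent eq_start.
by apply: eq_foldl_bidc_step => l; rewrite mem_filter => /andP [/eq_draws].
Qed.

Definition resample (i j : 'I_n) (f : 'I_N -> 'I_N) (w : Omega N n) :
    Omega N n :=
  (w.1, [ffun q => if q == (i, j) then f (w.2 q) else w.2 q]).

Lemma resample_inj (i j : 'I_n) (f : 'I_N -> 'I_N) :
  injective f -> injective (resample i j f).
Proof.
move=> f_inj [A u] [A' u'] [<-] /ffunP eq_u; congr (_, _); apply/ffunP => q.
by move: (eq_u q); rewrite !ffunE; case: eqP => // _ /f_inj.
Qed.

Lemma Xprev_resample (i j : 'I_n) f (w : Omega N n) :
  Xprev (resample i j f w) i j = Xprev w i j.
Proof.
apply: eq_foldl_bidc_step => l; rewrite mem_filter => /andP [lt_lj _] /=.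
by rewrite ffunE; case: eqP => // -[eq_lj]; rewrite eq_lj ltnn in lt_lj.
Qed.

Lemma Xent_resample_prec (i j : 'I_n) f (w : Omega N n) (q : 'I_n * 'I_n) :
  prec q (i, j) -> Xent E (resample i j f w) q.1 q.2 = Xent E w q.1 q.2.
Proof.
move=> q_prec; apply: eq_Xent => // l le_lq /=; rewrite ffunE.
case: eqP => // -[eq_qi eq_lj]; move: q_prec.
by rewrite /prec /= -eq_qi -eq_lj ltnn eqxx ltnNge le_lq.
Qed.

Lemma Pr_resample (R : realFieldType)
    (mu : {ffun {ffun 'I_n -> {set 'I_N}} -> R}) (i j : 'I_n) (f : 'I_N -> 'I_N)
    (F : pred (Omega N n)) :
  injective f -> Pr mu (fun w => F (resample i j f w)) = Pr mu F.
Proof.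
by move=> f_inj; rewrite /Pr [RHS](reindex_inj (@resample_inj i j f f_inj)).
Qed.

Lemma eq_Pr (R : realFieldType)
    (mu : {ffun {ffun 'I_n -> {set 'I_N}} -> R}) (F F' : pred (Omega N n)) :
  F =1 F' -> Pr mu F = Pr mu F'.
Proof. by move=> eqF; apply: eq_bigr => w _; rewrite eqF. Qed.

Lemma Pr_predT (R : realFieldType)
    (mu : {ffun {ffun 'I_n -> {set 'I_N}} -> R}) :
  (0 < N)%N -> \sum_A mu A = 1 -> Pr mu predT = 1.
Proof.
move=> N_gt0 mu_sum1; rewrite /Pr; set c := (_ ^+ _)^-1.
rewrite (eq_bigr (fun w : Omega N n => mu w.1 * c)) => [|w _]; last first.
  by rewrite mulr1.
rewrite -(pair_bigA _ (fun A _ => mu A * c)) /=.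
under eq_bigr do rewrite sumr_const card_ffun card_prod !card_ord -mulr_natr.
rewrite -!mulr_suml mu_sum1 mul1r /c natrX mulVf //.
by rewrite expf_neq0 // pnatr_eq0 -lt0n.
Qed.

End Chains.

Lemma Pr_average_shift (R : realFieldType) (N n : nat)
    (mu : {ffun {ffun 'I_n -> {set 'I_N.+1}} -> R}) (i j : 'I_n)
    (F : pred (Omega N.+1 n)) :
  N.+1%:R * Pr mu F =
  \sum_w mu w.1 * (N.+1%:R ^+ (n * n))^-1 *
         #|[set v | F (resample i j (+%R^~ v) w)]|%:R.
Proof.
have -> : N.+1%:R * Pr mu F = \sum_(v < N.+1) Pr mu F.
  by rewrite sumr_const card_ord mulr_natl.
rewrite (eq_bigr (fun v => Pr mu (fun w => F (resample i j (+%R^~ v) w))))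
    => [|v _]; last by rewrite Pr_resample //; apply: addIr.
rewrite exchange_big; apply: eq_bigr => w _; rewrite -sumr_nat_bool mulr_sumr.
exact: eq_bigr.
Qed.

Lemma card_skel_shift (N n k : nat) (E : seq {set 'I_N.+1}) (i j : 'I_n)
    (w : Omega N.+1 n) :
  (2 <= N)%N -> #|nth set0 E k| = 2%N -> (k < size E)%N ->
  (forall l, indep (take k E) (w.1 l)) ->
  (2 <= #|[set v | skel k E i j (resample i j (+%R^~ v) w)]|)%N.
Proof.
move=> N_ge2 e_card k_lt indep_start.
set Y := Xprev (take k E) w i j.
have indepY : indep (take k E) Y by apply: indep_foldl_bidc_step.
have -> : [set v | skel k E i j (resample i j (+%R^~ v) w)] =
    (fun v => w.2 (i, j) + v) @^-1:
      [set u | ~~ (nth set0 E k \subset bidc_step (take k E) Y u)].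
  apply/setP => v; rewrite !inE /skel Xent_Xprev Xprev_resample ffunE eqxx.
  have := indep_bidc_step (w.2 (i, j) + v) indepY.
  by rewrite (take_nth set0 k_lt) /indep all_rcons => ->; rewrite andbT.
by rewrite card_preimset; [exact: card_bidc_step_notsub | exact: addrI].
Qed.

(* The events fixed by resampling step (i, j) include every event on the
   skeleton entries preceding (i, j). *)
Lemma Pr_skel_and_ge (R : realFieldType) (N n k : nat) (E : seq {set 'I_N.+1})
    (mu : {ffun {ffun 'I_n -> {set 'I_N.+1}} -> R}) (i j : 'I_n)
    (Ev : pred (Omega N.+1 n)) :
  (2 <= N)%N -> #|nth set0 E k| = 2%N -> (k < size E)%N ->
  (forall A, 0 <= mu A) ->
  (forall A, mu A != 0 -> forall l, indep (take k E) (A l)) ->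
  (forall f w, Ev (resample i j f w) = Ev w) ->
  2 * Pr mu Ev <= N.+1%:R * Pr mu (fun w => skel k E i j w && Ev w).
Proof.
move=> N_ge2 e_card k_lt mu_ge0 mu_indep Ev_inv.
rewrite (Pr_average_shift _ i j) /Pr mulr_sumr; apply: ler_sum => w _.
have [mu0|/mu_indep indep_start] := eqVneq (mu w.1) 0.
  by rewrite mu0 !mul0r mulr0.
rewrite mulrCA ler_wpM2l ?mulr_ge0 ?invr_ge0 ?exprn_ge0 ?ler0n //.
under eq_finset => v do rewrite Ev_inv.
case: (Ev w); last by rewrite mulr0 ler0n.
under eq_finset => v do rewrite andbT.
by rewrite mulr1 -[2]/(2%:R) ler_nat; exact: card_skel_shift.
Qed.

Theorem lemma4 (R : realFieldType) (N : nat) (edges : seq {set 'I_N})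
  (k n : nat) (mu : {ffun {ffun 'I_n -> {set 'I_N}} -> R}) :
  (4 <= N)%N ->
  (forall e, e \in edges -> #|e| = 2%N) -> uniq edges ->
  (k < size edges)%N -> (1 <= n)%N ->
  (forall A, 0 <= mu A) -> \sum_A mu A = 1 ->
  (forall A, mu A != 0 -> forall i, indep (take k edges) (A i)) ->
  p_robust (Pr mu) (skel k edges) (2 / N%:R).
Proof.
case: N edges mu => [//|N] edges mu N_ge4 edge_card _ k_lt _.
move=> mu_ge0 mu_sum1 mu_indep.
have N_ge2 : (2 <= N)%N by apply: ltnW.
have e_card : #|nth set0 edges k| = 2%N by apply/edge_card/mem_nth.
have N_gt0 : 0 < N.+1%:R :> R by rewrite ltr0n.
have key := Pr_skel_and_ge N_ge2 e_card k_lt mu_ge0 mu_indep.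
split=> [i j | i j Q a Q_prec Ev Pr_Ev_gt0].
  have := key i j predT (fun _ _ => erefl); rewrite Pr_predT // mulr1.
  rewrite (eq_Pr mu (fun w => andbT (skel k edges i j w))).
  by rewrite ler_pdivrMr // mulrC.
have Ev_inv f w : Ev (resample i j f w) = Ev w.
  apply: eq_forallb_in => q /Q_prec q_prec.
  by rewrite /skel Xent_resample_prec.
rewrite ler_pdivlMr // mulrAC ler_pdivrMr // [X in _ <= X]mulrC.
exact: key.
Qed.
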